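(* Under Assumptions 1, 2 and 3, let $\lambda_1,\lambda_2>0$, let $(\hat S,\hat L)$ be as in the context and $\Delta L=L^*-\hat L$. Then, with probability at least $1-2e^{-\tilde\nu_n\gamma_n sn}$, $$\Big|\big\langle \Omega\odot(A-\hat S-\hat S^\top)_{|O}\,\big|\,\Delta L\big\rangle\Big|\le 16\,\tilde\nu_n\gamma_n\rho_n ns,$$ where $\langle M|N\rangle=\sum_{i,j}M_{ij}N_{ij}$.
   Context: Let $n\ge2$ and let $[n]=\mathcal I\sqcup\mathcal O$ be a partition into inliers $\mathcal I$ and outliers $\mathcal O$, $s=|\mathcal O|$. Write $I=\mathcal I\times\mathcal I$ and $O=([n]\times[n])\setminus I$. For $M\in\mathbb R^{n\times n}$ and $\mathcal S\subset[n]\times[n]$, $M_{|\mathcal S}=\mathbb 1_{\mathcal S}\odot M$ ($\odot$ entrywise product, $\mathbb 1_{\mathcal S}$ indicator matrix). Let $\rho_n\in(0,1/2]$, $\gamma_n\in(0,1]$, $k\ge1$. $L^*$ is a symmetric $n\times n$ matrix of rank $k$ with entries in $[0,\rho_n]$ and $L^*_{ij}=0$ whenever $i\in\mathcal O$ or $j\in\mathcal O$. $S^*$ is an $n\times n$ matrix with entries in $[0,\gamma_n]$, zero diagonal, $S^*_{\cdot,j}=0$ for all $j\in\mathcal I$, and $L^*+S^*+(S^* )^\top$ has entries in $[0,1]$. The adjacency matrix $A$ is symmetric with zero diagonal and $(A_{ij})_{i<j}$ are independent, $A_{ij}\sim\mathrm{Bernoulli}((L^*+S^*+(S^* )^\top)_{ij})$.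 The sampling matrix $\Omega$ is symmetric with zero diagonal, $(\Omega_{ij})_{i<j}$ are independent $\mathrm{Bernoulli}(\Pi_{ij})$, $\Omega$ independent of $A$, $\Pi=\mathbb E[\Omega]$. Norms: $\|M\|_{2,1}=\sum_j(\sum_iM_{ij}^2)^{1/2}$, $\|\cdot\|_F$ Frobenius, $\|\cdot\|_*$ nuclear. Assumption 1: there is $\mu_n>0$ with $\Pi_{ij}\ge\mu_n$ for all $(i,j)\in I$, $i\neq j$; and $\nu_n,\tilde\nu_n\in(0,1]$ satisfy $\sum_{j\in\mathcal I}\Pi_{ij}\le\nu_n n$ for all $i\in\mathcal I$ and $\sum_{j\in\mathcal O}\Pi_{ij}\le\tilde\nu_n s$ for all $i\in[n]$. Assumption 2: $\nu_n\rho_n\ge\log(n)/n$ and $\tilde\nu_n\gamma_n\ge\log(n)/n$. Assumption 3: $\nu_n\rho_n n\ge\tilde\nu_n\gamma_n s$. Estimator: for $\lambda_1,\lambda_2>0$, $\mathcal F(S,L)=\frac12\|\Omega\odot(A-L-S-S^\top)\|_F^2+\lambda_1\|L\|_*+\lambda_2\|S\|_{2,1}$; $(\hat S,\hat L)$ is any minimizer of $\mathcal F$ over $S\in[0,1]^{n\times n}$ and symmetric $L\in[0,\rho_n]^{n\times n}$, and (standing assumption that the upper box constraint on $S$ is inactive) $\hat S$ also minimizes $S\mapsto\mathcal F(S,\hat L)$ over nonnegative $S\in\mathbb R_+^{n\times n}$. *)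

From Stdlib Require Import Reals.
From Stdlib Require Import ClassicalEpsilon.
From mathcomp Require Import all_boot.
Set Implicit Arguments.
Unset Strict Implicit.
Unset Printing Implicit Defensive.

Local Open Scope R_scope.

Definition mat (n : nat) := 'I_n -> 'I_n -> R.

Notation "\rsum_ ( i : T ) F" := (\big[Rplus/R0]_(i : T) F)
  (at level 41, F at level 41, i, T at level 50).
Notation "\rsum_ ( i < n ) F" := (\big[Rplus/R0]_(i < n) F)
  (at level 41, F at level 41, i, n at level 50).
Notation "\rsum_ ( i 'in' A ) F" := (\big[Rplus/R0]_(i in A) F)
  (at level 41, F at level 41, i, A at level 50).

Definition transp n (M : mat n) : mat n := fun i j => M j i.
Definition symm_mat n (M : mat n) : Prop := forall i j, M i j = M j i.

Definition frob_inner n (M N : mat n) : R :=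
  \rsum_(i < n) \rsum_(j < n) (M i j * N i j).

Definition frob_sq n (M : mat n) : R := frob_inner M M.

Definition norm21 n (M : mat n) : R :=
  \rsum_(j < n) sqrt (\rsum_(i < n) (M i j * M i j)).

Definition orthogonal n (U : mat n) : Prop :=
  forall i j, \rsum_(k < n) (U k i * U k j) = (if i == j then 1 else 0).

Definition is_nuclear_norm n (M : mat n) (v : R) : Prop :=
  exists (U V : mat n) (sigma : 'I_n -> R),
    orthogonal U /\ orthogonal V /\ (forall r, 0 <= sigma r) /\
    (forall i j, M i j = \rsum_(r < n) (U i r * sigma r * V j r)) /\
    v = \rsum_(r < n) sigma r.

Definition nucnorm n (M : mat n) : R :=
  epsilon (inhabits 0) (is_nuclear_norm M).

Definition rank_le n (M : mat n) (k : nat) : Prop :=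
  exists (u v : nat -> 'I_n -> R),
    forall i j, M i j = \big[Rplus/R0]_(0 <= r < k) (u r i * v r j).
Definition has_rank n (M : mat n) (k : nat) : Prop :=
  rank_le M k /\ forall k' : nat, (k' < k)%N -> ~ rank_le M k'.

Definition hadamard n (M N : mat n) : mat n := fun i j => M i j * N i j.
Definition restrict n (Sset : 'I_n -> 'I_n -> bool) (M : mat n) : mat n :=
  fun i j => if Sset i j then M i j else 0.

Definition outl_pairs n (Inl : {set 'I_n}) : 'I_n -> 'I_n -> bool :=
  fun i j => ~~ ((i \in Inl) && (j \in Inl)).

(* An outcome records, for every ordered pair (i,j), the pair of bits
   (A_ij, Omega_ij); only pairs with i < j carry randomness, the other
   coordinates are forced to (false,false) by the weight below. *)
Definition outcome (n : nat) := {ffun 'I_n * 'I_n -> bool * bool}.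

Definition bern (p : R) (b : bool) : R := if b then p else 1 - p.

(* P = expected adjacency (L* + S* + S*^T), Pi = sampling probabilities.
   Weight of an outcome: independent Bernoulli(P_ij) for A_ij and
   independent Bernoulli(Pi_ij) for Omega_ij, i < j. *)
Definition weight n (P Pi : mat n) (w : outcome n) : R :=
  \big[Rmult/R1]_(ij : 'I_n * 'I_n)
     (if (ij.1 < ij.2)%N
      then bern (P ij.1 ij.2) (w ij).1 * bern (Pi ij.1 ij.2) (w ij).2
      else if w ij == (false, false) then 1 else 0).

Definition b2R (b : bool) : R := if b then 1 else 0.

Definition adj_of n (w : outcome n) : mat n := fun i j =>
  if (i < j)%N then b2R (w (i, j)).1
  else if (j < i)%N then b2R (w (j, i)).1 else 0.
Definition samp_of n (w : outcome n) : mat n := fun i j =>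
  if (i < j)%N then b2R (w (i, j)).2
  else if (j < i)%N then b2R (w (j, i)).2 else 0.

Definition indic (P : Prop) : R :=
  if excluded_middle_informative P then 1 else 0.

Definition prob n (P Pi : mat n) (E : outcome n -> Prop) : R :=
  \rsum_(w : outcome n) (weight P Pi w * indic (E w)).

Definition objF n (A Om : mat n) (lam1 lam2 : R) (S L : mat n) : R :=
  / 2 * frob_sq (hadamard Om (fun i j => A i j - L i j - S i j - S j i))
  + lam1 * nucnorm L + lam2 * norm21 S.

From HB Require Import structures.
From Stdlib Require Import Reals Lra ClassicalEpsilon.
From mathcomp Require Import all_boot.
Set Implicit Arguments.
Unset Strict Implicit.
Local Open Scope R_scope.

(* At a minimiser, lowering an entry of [Shat] cannot help, so on every observed
   pair the residual [A - Shat - Shat^T] lies in [0, A]; since [|L* - Lhat| <= rho]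
   entrywise, the inner product is at most [2 rho X], where [X] counts the observed
   edges [i < j] among the pairs touching an outlier.  [X] is a sum of independent
   Bernoulli([P_ij Pi_ij]) variables; [L*] vanishes on these pairs and [S*] lives on
   outlier columns, so Assumption 1 bounds their total mean by [2c] with
   [c = nut gam s n].  Hence [E exp X <= exp (4c)], and Markov's inequality gives
   [P (X > 8c) <= exp (-4c)]. *)

HB.instance Definition _ := Monoid.isComLaw.Build R 0 Rplus
  (fun x y z => esym (Rplus_assoc x y z)) Rplus_comm Rplus_0_l.
HB.instance Definition _ := Monoid.isComLaw.Build R 1 Rmult
  (fun x y z => esym (Rmult_assoc x y z)) Rmult_comm Rmult_1_l.
HB.instance Definition _ := Monoid.isMulLaw.Build R 0 Rmult Rmult_0_l Rmult_0_r.
HB.instance Definition _ :=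
  Monoid.isAddLaw.Build R Rmult Rplus Rmult_plus_distr_r Rmult_plus_distr_l.

Section RealBigops.
Variables (I : Type) (r : seq I) (P : pred I).

Lemma Rsum_le (F G : I -> R) :
  (forall i, P i -> F i <= G i) ->
  \big[Rplus/0]_(i <- r | P i) F i <= \big[Rplus/0]_(i <- r | P i) G i.
Proof. by move=> FG; apply: (big_ind2 Rle) => //; [lra | move=> *; lra]. Qed.

Lemma Rsum_ge0 (F : I -> R) :
  (forall i, P i -> 0 <= F i) -> 0 <= \big[Rplus/0]_(i <- r | P i) F i.
Proof. by move=> F0; apply: (big_ind (Rle 0)) => // [|x y]; lra. Qed.

Lemma Rsum_sub (F G : I -> R) :
  \big[Rplus/0]_(i <- r | P i) (F i - G i) =
  \big[Rplus/0]_(i <- r | P i) F i - \big[Rplus/0]_(i <- r | P i) G i.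
Proof.
by apply: (big_ind3 (fun x y z => x = y - z)) => [|x1 x2 x3 y1 y2 y3 -> ->|//]; lra.
Qed.

Lemma Rabs_Rsum_le (F : I -> R) :
  Rabs (\big[Rplus/0]_(i <- r | P i) F i) <= \big[Rplus/0]_(i <- r | P i) Rabs (F i).
Proof.
apply: (big_ind2 (fun x y => Rabs x <= y)) => [|x1 x2 y1 y2 h1 h2|i _].
- by rewrite Rabs_R0; lra.
- by have := Rabs_triang x1 y1; lra.
- exact: Rle_refl.
Qed.

Lemma Rprod_le (F G : I -> R) :
  (forall i, P i -> 0 <= F i <= G i) ->
  0 <= \big[Rmult/1]_(i <- r | P i) F i <= \big[Rmult/1]_(i <- r | P i) G i.
Proof.
move=> FG; apply: (big_ind2 (fun x y => 0 <= x <= y)) => // [|x1 x2 y1 y2 h1 h2].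
  by lra.
by split; [apply: Rmult_le_pos | apply: Rmult_le_compat]; lra.
Qed.

Lemma exp_Rsum (F : I -> R) :
  exp (\big[Rplus/0]_(i <- r | P i) F i) = \big[Rmult/1]_(i <- r | P i) exp (F i).
Proof. exact: (big_morph exp exp_plus exp_0). Qed.

End RealBigops.

Lemma exp_le_compat x y : x <= y -> exp x <= exp y.
Proof. by case=> [/exp_increasing|->]; lra. Qed.

Lemma Rsum_const_ord n (x : R) : \rsum_(i < n) x = INR n * x.
Proof.
rewrite big_const_ord; elim: n => [|n IH]; first by rewrite /=; ring.
by rewrite iterS IH S_INR; ring.
Qed.

Lemma Rsum_bool2 (F : bool * bool -> R) :
  \big[Rplus/0]_(b : bool * bool) F b =
  F (true, true) + F (true, false) + (F (false, true) + F (false, false)).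
Proof.
transitivity (\big[Rplus/0]_(b : bool * bool) F (b.1, b.2)).
  by apply: eq_bigr => -[].
by rewrite -(pair_bigA _ (fun x y => F (x, y))) /= !big_bool /=; ring.
Qed.

Lemma double_sum_two_points n (i j : 'I_n) (F : 'I_n -> 'I_n -> R) :
  i != j ->
  (forall a b, ~~ ((a == i) && (b == j)) -> ~~ ((a == j) && (b == i)) -> F a b = 0) ->
  \rsum_(a < n) \rsum_(b < n) F a b = F i j + F j i.
Proof.
move=> ij F0; rewrite pair_bigA (bigD1 (i, j)) // (bigD1 (j, i)) /=; last first.
  by rewrite xpair_eqE negb_and eq_sym ij.
rewrite big1 ?Rplus_0_r // => -[a b] /andP[ji ij'].
by apply: F0; rewrite -xpair_eqE.
Qed.

Definition coord_weight n (P Pi : mat n) (ij : 'I_n * 'I_n) (b : bool * bool) : R :=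
  if (ij.1 < ij.2)%N then bern (P ij.1 ij.2) b.1 * bern (Pi ij.1 ij.2) b.2
  else if b == (false, false) then 1 else 0.

Section ProductMeasure.
Variables (n : nat) (P Pi : mat n).
Hypotheses (hP : forall i j, 0 <= P i j <= 1) (hPi : forall i j, 0 <= Pi i j <= 1).

Lemma weightE w : weight P Pi w = \big[Rmult/1]_(p : 'I_n * 'I_n) coord_weight P Pi p (w p).
Proof. by []. Qed.

Lemma coord_weight_ge0 p b : 0 <= coord_weight P Pi p b.
Proof.
rewrite /coord_weight /bern; case: ifP => _; last by case: ifP; lra.
by have := hP p.1 p.2; have := hPi p.1 p.2; case: b.1; case: b.2 => ? ?;
  apply: Rmult_le_pos; lra.
Qed.

Lemma coord_weight_sum1 p : \big[Rplus/0]_(b : bool * bool) coord_weight P Pi p b = 1.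
Proof. by rewrite Rsum_bool2 /coord_weight /bern /=; case: ifP => _; ring. Qed.

Lemma weight_ge0 w : 0 <= weight P Pi w.
Proof.
rewrite weightE; apply: (big_ind (Rle 0)) => [|x y|p _]; first lra.
  exact: Rmult_le_pos.
exact: coord_weight_ge0.
Qed.

Lemma expect_exp_coord_sum (f : 'I_n * 'I_n -> bool * bool -> R) :
  \rsum_(w : outcome n)
    (weight P Pi w * exp (\big[Rplus/0]_(p : 'I_n * 'I_n) f p (w p))) =
  \big[Rmult/1]_(p : 'I_n * 'I_n)
    \big[Rplus/0]_(b : bool * bool) (coord_weight P Pi p b * exp (f p b)).
Proof.
rewrite bigA_distr_bigA; apply: eq_bigr => w _.
by rewrite weightE exp_Rsum -big_split.
Qed.

Lemma weight_sum1 : \rsum_(w : outcome n) weight P Pi w = 1.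
Proof.
transitivity (\rsum_(w : outcome n)
    (weight P Pi w * exp (\big[Rplus/0]_(p : 'I_n * 'I_n) 0))).
  by apply: eq_bigr => w _; rewrite big1 // exp_0 Rmult_1_r.
rewrite (expect_exp_coord_sum (fun _ _ => 0)) big1 // => p _.
by rewrite -[RHS](coord_weight_sum1 p); apply: eq_bigr => b _; rewrite exp_0 Rmult_1_r.
Qed.

(* Markov's inequality applied to [exp X]. *)
Lemma prob_ge_exp_moment (E : outcome n -> Prop) (X : outcome n -> R) t :
  (forall w, X w <= t -> E w) ->
  1 - exp (- t) * (\rsum_(w : outcome n) (weight P Pi w * exp (X w))) <= prob P Pi E.
Proof.
move=> XE.
have -> : 1 - exp (- t) * (\rsum_(w : outcome n) (weight P Pi w * exp (X w))) =
    \rsum_(w : outcome n) (weight P Pi w * (1 - exp (X w - t))).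
  rewrite -{1}weight_sum1 big_distrr /= -Rsum_sub.
  by apply: eq_bigr => w _; rewrite exp_plus; ring.
rewrite /prob; apply: Rsum_le => w _; apply: Rmult_le_compat_l; first exact: weight_ge0.
rewrite /indic; case: excluded_middle_informative => [Ew|notE] /=.
  by have e0 := exp_pos (X w - t); lra.
suff : exp 0 <= exp (X w - t) by rewrite exp_0; lra.
apply: exp_le_compat; case: (Rle_lt_dec (X w) t) => [Xt|]; last lra.
by case: notE; apply: XE.
Qed.

End ProductMeasure.

Lemma bernoulli_exp_moment_le x : 0 <= x -> 1 + x * (exp 1 - 1) <= exp (2 * x).
Proof.
move=> x0; have e3 := exp_le_3; have := exp_ineq1_le (2 * x); nra.
Qed.

Definition obs_pair n (sel : 'I_n -> 'I_n -> bool) (p : 'I_n * 'I_n) (b : bool * bool) : R :=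
  if (p.1 < p.2)%N && sel p.1 p.2 then b2R b.1 * b2R b.2 else 0.

Definition obs_count n (sel : 'I_n -> 'I_n -> bool) (w : outcome n) : R :=
  \big[Rplus/0]_(p : 'I_n * 'I_n) obs_pair sel p (w p).

Lemma obs_count_exp_moment_le n (P Pi : mat n) (sel : 'I_n -> 'I_n -> bool) :
  (forall i j, 0 <= P i j <= 1) -> (forall i j, 0 <= Pi i j <= 1) ->
  \rsum_(w : outcome n) (weight P Pi w * exp (obs_count sel w)) <=
  exp (\big[Rplus/0]_(p : 'I_n * 'I_n)
         (if (p.1 < p.2)%N && sel p.1 p.2 then 2 * (P p.1 p.2 * Pi p.1 p.2) else 0)).
Proof.
move=> hP hPi; rewrite expect_exp_coord_sum exp_Rsum.
apply: (proj2 (Rprod_le _ _)) => p _; split.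
  apply: Rsum_ge0 => b _; apply: Rmult_le_pos; first exact: coord_weight_ge0.
  exact/Rlt_le/exp_pos.
rewrite Rsum_bool2 /coord_weight /obs_pair /bern /=.
have := hP p.1 p.2; have := hPi p.1 p.2.
case: (p.1 < p.2)%N; case: (sel p.1 p.2) => /= h1 h2;
  rewrite /b2R ?Rmult_1_r ?Rmult_0_r ?exp_0; try lra.
have := bernoulli_exp_moment_le (Rmult_le_pos _ _ (proj1 h2) (proj1 h1)); lra.
Qed.

Lemma sum_samp_adj_obs_count n (sel : 'I_n -> 'I_n -> bool) (w : outcome n) :
  (forall a b, sel a b = sel b a) ->
  \rsum_(a < n) \rsum_(b < n) (if sel a b then samp_of w a b * adj_of w a b else 0) =
  2 * obs_count sel w.
Proof.
move=> selC; pose o a b := obs_pair sel (a, b) (w (a, b)).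
have -> : 2 * obs_count sel w =
    \rsum_(a < n) \rsum_(b < n) o a b + \rsum_(a < n) \rsum_(b < n) o b a.
  have -> : obs_count sel w = \rsum_(a < n) \rsum_(b < n) o a b.
    by rewrite pair_bigA; apply: eq_bigr => -[].
  by rewrite [X in _ + X]exchange_big /=; ring.
rewrite -big_split; apply: eq_bigr => a _; rewrite -big_split; apply: eq_bigr => b _.
rewrite /o /obs_pair /samp_of /adj_of /= [sel b a]selC.
by case: (ltngtP a b) => _; case: (sel a b) => /=; ring.
Qed.

Lemma frob_sq_shift n (M M' : mat n) :
  frob_sq M' =
  frob_sq M + \rsum_(a < n) \rsum_(b < n) (M' a b * M' a b - M a b * M a b).
Proof.
rewrite /frob_sq /frob_inner -big_split; apply: eq_bigr => a _.
by rewrite -big_split; apply: eq_bigr => b _ /=; ring.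
Qed.

Lemma norm21_le_abs n (M N : mat n) :
  (forall i j, Rabs (M i j) <= Rabs (N i j)) -> norm21 M <= norm21 N.
Proof.
move=> MN; apply: Rsum_le => j _; apply: sqrt_le_1_alt.
by apply: Rsum_le => i _; apply: Rsqr_le_abs_1.
Qed.

Section ObservedResidual.
Variables (n : nat) (A Om L S : mat n) (lam1 lam2 : R).
Hypotheses (hlam2 : 0 < lam2) (hA : symm_mat A) (hOm : symm_mat Om) (hL : symm_mat L).
Hypotheses (hOmdiag : forall i, Om i i = 0) (hS0 : forall i j, 0 <= S i j).
Hypothesis hSmin : forall S' : mat n, (forall i j, 0 <= S' i j) ->
  objF A Om lam1 lam2 S L <= objF A Om lam1 lam2 S' L.

(* If the residual were negative, lowering [S_ij] by [e = min(S_ij, -resid_ij)] would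
   strictly decrease the fit on the entries [(i,j)], [(j,i)] and not increase the penalty. *)
Lemma minimizer_resid_ge0 i j :
  Om i j = 1 -> 0 < S i j -> 0 <= A i j - L i j - S i j - S j i.
Proof.
move=> Oij Sij; have ij : i != j by apply/eqP=> eij; move: Oij; rewrite eij hOmdiag; lra.
set r := A i j - L i j - S i j - S j i.
case: (Rle_lt_dec 0 r) => // r_neg; exfalso.
pose e := Rmin (S i j) (- r).
have e_pos : 0 < e by apply: Rmin_glb_lt; lra.
have e_le : e <= S i j /\ e <= - r by split; [apply: Rmin_l | apply: Rmin_r].
pose S' : mat n := fun a b => if (a == i) && (b == j) then S i j - e else S a b.
have S'0 : forall a b, 0 <= S' a b.
  by move=> a b; rewrite /S'; case: ifP => _; [lra | apply: hS0].
pose d := (r + e) * (r + e) - r * r.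
have d_neg : d < 0 by rewrite /d; nra.
have fit : frob_sq (hadamard Om (fun a b => A a b - L a b - S' a b - S' b a)) =
    frob_sq (hadamard Om (fun a b => A a b - L a b - S a b - S b a)) + (d + d).
  rewrite (frob_sq_shift (hadamard Om (fun a b => A a b - L a b - S a b - S b a))).
  rewrite (double_sum_two_points ij) => [|a b ab ba].
    rewrite /hadamard /S' !eqxx (negbTE ij) [j == i]eq_sym (negbTE ij) /=.
    by rewrite (hOm j i) Oij (hA j i) (hL j i) /d /r; ring.
  by rewrite /hadamard /S' (negbTE ab) andbC (negbTE ba); ring.
have pen : norm21 S' <= norm21 S.
  apply: norm21_le_abs => a b.
  rewrite !Rabs_right; [|exact: Rle_ge (hS0 a b) | exact: Rle_ge (S'0 a b)].
  by rewrite /S'; case: ifP => [/andP[/eqP-> /eqP->]|_]; lra.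
have := Rmult_le_compat_l _ _ _ (Rlt_le _ _ hlam2) pen.
have := hSmin S'0; rewrite /objF fit; lra.
Qed.

Hypotheses (hA0 : forall i j, 0 <= A i j) (hL0 : forall i j, 0 <= L i j).

Lemma observed_resid_bounds a b :
  Om a b = 1 -> 0 <= A a b - S a b - S b a <= A a b.
Proof.
move=> Oab; have := hS0 a b; have := hS0 b a; have := hL0 a b.
case: (Rlt_le_dec 0 (S a b)) => [Sab|Sab].
  by have := minimizer_resid_ge0 Oab Sab; lra.
case: (Rlt_le_dec 0 (S b a)) => [Sba|Sba].
  have Oba : Om b a = 1 by rewrite hOm.
  by have := minimizer_resid_ge0 Oba Sba; rewrite (hA b a) (hL b a); lra.
by have := hA0 a b; lra.
Qed.

Hypothesis hOm01 : forall i j, Om i j = 0 \/ Om i j = 1.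

Lemma outlier_inner_le (sel : 'I_n -> 'I_n -> bool) (Ls : mat n) rho :
  (forall i j, L i j <= rho) -> (forall i j, 0 <= Ls i j <= rho) ->
  Rabs (frob_inner (hadamard Om (restrict sel (fun i j => A i j - S i j - S j i)))
          (fun i j => Ls i j - L i j)) <=
  rho * \rsum_(a < n) \rsum_(b < n) (if sel a b then Om a b * A a b else 0).
Proof.
move=> hLrho hLs; rewrite /frob_inner big_distrr /=.
apply: Rle_trans (Rabs_Rsum_le _ _ _) _; apply: Rsum_le => a _.
rewrite big_distrr /=; apply: Rle_trans (Rabs_Rsum_le _ _ _) _; apply: Rsum_le => b _.
rewrite /hadamard /restrict; case: (sel a b); last first.
  by rewrite Rmult_0_r Rmult_0_l Rabs_R0 Rmult_0_r; lra.
case: (hOm01 a b) => Oab; rewrite Oab.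
  by rewrite !Rmult_0_l Rabs_R0 Rmult_0_r; lra.
have [r0 rA] := observed_resid_bounds Oab.
have dL : Rabs (Ls a b - L a b) <= rho.
  by have := hLs a b; have := hL0 a b; have := hLrho a b => *; apply: Rabs_le; lra.
rewrite !Rmult_1_l Rabs_mult (Rabs_right _ (Rle_ge _ _ r0)).
have := Rabs_pos (Ls a b - L a b); nra.
Qed.

End ObservedResidual.

Section OutlierEdgeMass.
Variables (n : nat) (Inl : {set 'I_n}) (Lstar Sstar Pi : mat n) (gam nut : R).
Hypotheses (hgam : 0 <= gam) (hSbox : forall i j, 0 <= Sstar i j <= gam)
  (hScol : forall i j, j \in Inl -> Sstar i j = 0)
  (hPibox : forall i j, 0 <= Pi i j <= 1)
  (hA1nut : forall i, \rsum_(j in ~: Inl) Pi i j <= nut * INR #|~: Inl|).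

Lemma Sstar_Pi_mass_le :
  \rsum_(a < n) \rsum_(b < n) (Sstar a b * Pi a b) <= nut * gam * INR #|~: Inl| * INR n.
Proof.
apply: Rle_trans (_ : _ <= \rsum_(a < n) (gam * (nut * INR #|~: Inl|))) _; last first.
  by rewrite Rsum_const_ord; lra.
apply: Rsum_le => a _.
apply: Rle_trans (_ : _ <= \rsum_(b < n) (if b \in ~: Inl then gam * Pi a b else 0)) _.
  apply: Rsum_le => b _; have := hPibox a b; have := hSbox a b.
  case: ifP => [_|]; first by move=> *; apply: Rmult_le_compat_r; lra.
  by rewrite in_setC => /negbFE/hScol->; lra.
by rewrite -big_mkcond -big_distrr /=; apply: Rmult_le_compat_l; [lra | apply: hA1nut].
Qed.

Hypotheses (hLout : forall i j, i \notin Inl \/ j \notin Inl -> Lstar i j = 0)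
  (hPisym : symm_mat Pi).

Lemma outlier_edge_mass_le :
  \big[Rplus/0]_(p : 'I_n * 'I_n)
    (if (p.1 < p.2)%N && outl_pairs Inl p.1 p.2
     then 2 * ((Lstar p.1 p.2 + Sstar p.1 p.2 + Sstar p.2 p.1) * Pi p.1 p.2) else 0)
  <= 4 * (nut * gam * INR #|~: Inl| * INR n).
Proof.
rewrite -(pair_bigA _ (fun a b : 'I_n => if (a < b)%N && outl_pairs Inl a b
  then 2 * ((Lstar a b + Sstar a b + Sstar b a) * Pi a b) else 0)) /=.
apply: Rle_trans (_ : _ <= \rsum_(a < n) \rsum_(b < n)
  (2 * (Sstar a b * Pi a b) + 2 * (Sstar b a * Pi b a))) _.
  apply: Rsum_le => a _; apply: Rsum_le => b _.
  have := hSbox a b; have := hSbox b a; have := hPibox a b; have := hPibox b a.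
  case: ifP => [/andP[_ O] | _] *; last nra.
  rewrite hLout ?(hPisym b a); first lra.
  by move: O; rewrite /outl_pairs negb_and => /orP.
under eq_bigr => a _ do rewrite big_split -!big_distrr /=.
rewrite big_split -!big_distrr /= [X in _ + 2 * X]exchange_big /=.
have hM := Sstar_Pi_mass_le; set M := \rsum_(a < n) \rsum_(b < n) _ in hM *.
have -> : 2 * M + 2 * M = 4 * M by ring.
apply: Rmult_le_compat_l; [lra | exact: hM].
Qed.

End OutlierEdgeMass.

Lemma adj_symm n (w : outcome n) : symm_mat (adj_of w).
Proof. by move=> i j; rewrite /adj_of; case: (ltngtP i j). Qed.

Lemma samp_symm n (w : outcome n) : symm_mat (samp_of w).
Proof. by move=> i j; rewrite /samp_of; case: (ltngtP i j). Qed.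

Lemma samp_diag n (w : outcome n) i : samp_of w i i = 0.
Proof. by rewrite /samp_of ltnn. Qed.

Lemma samp01 n (w : outcome n) i j : samp_of w i j = 0 \/ samp_of w i j = 1.
Proof.
have b01 (b : bool) : b2R b = 0 \/ b2R b = 1 by case: b; [right | left].
by rewrite /samp_of; case: ifP => _; [|case: ifP => _]; [apply: b01 | apply: b01 | left].
Qed.

Lemma adj_ge0 n (w : outcome n) i j : 0 <= adj_of w i j.
Proof.
have b0 (b : bool) : 0 <= b2R b by case: b => /=; lra.
by rewrite /adj_of; case: ifP => _; [|case: ifP => _]; [apply: b0 | apply: b0 | lra].
Qed.

Unset Implicit Arguments.

Theorem mainTheorem11
  (n : nat) (hn : (2 <= n)%N)
  (Inl : {set 'I_n})
  (rho gam : R) (hrho : 0 < rho <= / 2) (hgam : 0 < gam <= 1)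
  (k : nat) (hk : (1 <= k)%N)
  (Lstar Sstar Pi : mat n)
  (hLsym : symm_mat Lstar) (hLrank : has_rank Lstar k)
  (hLbox : forall i j, 0 <= Lstar i j <= rho)
  (hLout : forall i j, i \notin Inl \/ j \notin Inl -> Lstar i j = 0)
  (hSbox : forall i j, 0 <= Sstar i j <= gam)
  (hSdiag : forall i, Sstar i i = 0)
  (hScol : forall i j, j \in Inl -> Sstar i j = 0)
  (hPbox : forall i j, 0 <= Lstar i j + Sstar i j + Sstar j i <= 1)
  (hPisym : symm_mat Pi) (hPidiag : forall i, Pi i i = 0)
  (hPibox : forall i j, 0 <= Pi i j <= 1)
  (nu nut : R) (hnu : 0 < nu <= 1) (hnut : 0 < nut <= 1)
  (hA1mu : exists mu : R, 0 < mu /\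
      forall i j, i \in Inl -> j \in Inl -> i <> j -> mu <= Pi i j)
  (hA1nu : forall i, i \in Inl -> \rsum_(j in Inl) Pi i j <= nu * INR n)
  (hA1nut : forall i, \rsum_(j in ~: Inl) Pi i j <= nut * INR #|~: Inl|)
  (hA2a : ln (INR n) / INR n <= nu * rho)
  (hA2b : ln (INR n) / INR n <= nut * gam)
  (hA3 : nut * gam * INR #|~: Inl| <= nu * rho * INR n)
  (lam1 lam2 : R) (hlam1 : 0 < lam1) (hlam2 : 0 < lam2)
  (Shat Lhat : outcome n -> mat n)
  (hSbox' : forall w i j, 0 <= Shat w i j <= 1)
  (hLsym' : forall w, symm_mat (Lhat w))
  (hLbox' : forall w i j, 0 <= Lhat w i j <= rho)
  (hmin : forall w (S L : mat n),
      (forall i j, 0 <= S i j <= 1) -> symm_mat L ->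
      (forall i j, 0 <= L i j <= rho) ->
      objF (adj_of w) (samp_of w) lam1 lam2 (Shat w) (Lhat w)
        <= objF (adj_of w) (samp_of w) lam1 lam2 S L)
  (hminS : forall w (S : mat n), (forall i j, 0 <= S i j) ->
      objF (adj_of w) (samp_of w) lam1 lam2 (Shat w) (Lhat w)
        <= objF (adj_of w) (samp_of w) lam1 lam2 S (Lhat w)) :
  1 - 2 * exp (- (nut * gam * INR #|~: Inl| * INR n))
  <= prob (fun i j => Lstar i j + Sstar i j + Sstar j i) Pi
       (fun w =>
          Rabs (frob_inner
                  (hadamard (samp_of w)
                     (restrict (outl_pairs Inl)
                        (fun i j => adj_of w i j - Shat w i j - Shat w j i)))
                  (fun i j => Lstar i j - Lhat w i j))
          <= 16 * nut * gam * rho * INR n * INR #|~: Inl|).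
Proof.
set c := nut * gam * INR #|~: Inl| * INR n.
have c0 : 0 <= c.
  by have := pos_INR #|~: Inl|; have := pos_INR n; rewrite /c => *;
     repeat apply: Rmult_le_pos; lra.
have event w : obs_count (outl_pairs Inl) w <= 8 * c -> Rabs (frob_inner
    (hadamard (samp_of w) (restrict (outl_pairs Inl)
       (fun i j => adj_of w i j - Shat w i j - Shat w j i)))
    (fun i j => Lstar i j - Lhat w i j)) <= 16 * nut * gam * rho * INR n * INR #|~: Inl|.
  move=> Xw; have S0 i j : 0 <= Shat w i j by case: (hSbox' w i j).
  have L0 i j : 0 <= Lhat w i j by case: (hLbox' w i j).
  apply: Rle_trans (outlier_inner_le hlam2 (adj_symm w) (samp_symm w) (hLsym' w)
    (samp_diag w) S0 (hminS w) (adj_ge0 w) L0 (samp01 w) (outl_pairs Inl)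
    (fun i j => proj2 (hLbox' w i j)) hLbox) _.
  rewrite sum_samp_adj_obs_count => [|a b]; last by rewrite /outl_pairs andbC.
  by have := proj1 hrho; rewrite /c in Xw; nra.
apply: Rle_trans (prob_ge_exp_moment hPbox hPibox event).
have mass := outlier_edge_mass_le (Rlt_le _ _ (proj1 hgam)) hSbox hScol hPibox hA1nut
  hLout hPisym.
have mgf := Rle_trans _ _ _ (obs_count_exp_moment_le (outl_pairs Inl) hPbox hPibox)
  (exp_le_compat mass).
set M := \rsum_(w : outcome n) _ in mgf *.
have := Rmult_le_compat_l _ _ _ (Rlt_le _ _ (exp_pos (- (8 * c)))) mgf.
rewrite -exp_plus -/c.
have : exp (- (8 * c) + 4 * c) <= exp (- c) by apply: exp_le_compat; lra.
have := exp_pos (- c); lra.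
Qed.
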